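(* For any $\delta>0$ and any $H\subseteq[n]$ such that $|H|>8\log\frac{4}{\delta}$, the algorithm $C_H$ is $(\varepsilon,\frac{\delta}{2})$-differentially private for \[ \varepsilon=\ln\left(1+\sqrt{\frac{32\log\frac{4}{\delta}}{|H|}}\right)<\sqrt{\frac{32\log\frac{4}{\delta}}{|H|}}. \]
   Context: For a fixed set $H\subseteq[n]$, the algorithm $C_H$ on input $(x_1,\dots,x_n)\in\{0,1\}^n$ draws $B\sim\mathrm{Bin}(|H|,1/2)$ and outputs $\sum_{i\notin H}x_i+B$. An algorithm $M$ on $\{0,1\}^n$ is $(\varepsilon,\delta)$-differentially private if for all $X,X'$ differing in one coordinate and every set $W$ of outputs, $\Pr[M(X)\in W]\le e^{\varepsilon}\Pr[M(X')\in W]+\delta$. $\log$ is the natural logarithm. *)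

From HB Require Import structures.
From mathcomp Require Import all_boot all_order all_algebra.
From mathcomp Require Import reals sequences exp.
Set Implicit Arguments. Unset Strict Implicit. Unset Printing Implicit Defensive.
Import Order.TTheory GRing.Theory Num.Theory.
Local Open Scope ring_scope.

(* A randomized algorithm on {0,1}^n with outputs in {0,...,m-1}, given by
   its output probability mass function. *)
Definition mechanism (R : realType) (n m : nat) :=
  {ffun 'I_n -> bool} -> 'I_m -> R.

Definition prob_in (R : realType) (n m : nat) (M : mechanism R n m)
  (X : {ffun 'I_n -> bool}) (W : {set 'I_m}) : R :=
  \sum_(k in W) M X k.

Definition neighbors (n : nat) (X X' : {ffun 'I_n -> bool}) : Prop :=
  exists i : 'I_n, X i != X' i /\ forall j, j != i -> X j = X' j.

Definition diff_private (R : realType) (n m : nat) (eps delta : R)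
  (M : mechanism R n m) : Prop :=
  forall X X', neighbors X X' ->
  forall W : {set 'I_m}, prob_in M X W <= expR eps * prob_in M X' W + delta.

(* C_H: outputs sum_{i notin H} x_i + B with B ~ Bin(|H|, 1/2);
   the output lies in {0,...,n}.  Pr[C_H(X) = k] = C(|H|, k - s) / 2^|H|
   when s <= k, where s = sum_{i notin H} x_i, and 0 otherwise. *)
Definition C_H (R : realType) (n : nat) (H : {set 'I_n}) : mechanism R n n.+1 :=
  fun X k =>
    let s := (\sum_(i | i \notin H) (X i : nat))%N in
    if (s <= k)%N then ('C(#|H|, k - s))%:R / 2 ^+ #|H| else 0.

(* On neighbouring inputs the output of C_H is Bin(h, 1/2), h = |H|, shifted
   by counts s and s' with |s - s'| <= 1.  Hence an output s + j at which the
   likelihood ratio exceeds 1 + c satisfies C(h, j) > (1 + c) C(h, j - 1), or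
   the mirrored inequality, and this forces j < (h + 1)/(2 + c) (or h - j <
   (h + 1)/(2 + c)), roughly c h / 4 away from the mean.  The Chernoff bound
   with Hoeffding's estimate cosh u <= exp (u^2 / 2) gives that tail mass at
   most 2 exp (- h c^2 / 32), which equals delta / 2 for
   c^2 = 32 log (4 / delta) / h; outside the tail the ratio is at most
   1 + c = e^eps. *)

From HB Require Import structures.
From mathcomp Require Import all_boot all_order all_algebra.
From mathcomp Require Import reals sequences exp.
From mathcomp Require Import ring lra topology normedtype derive.
Import Order.TTheory GRing.Theory Num.Theory numFieldNormedType.Exports.
Set Implicit Arguments.
Unset Strict Implicit.
Local Open Scope ring_scope.

Section Calculus.
Context {R : realType}.

Lemma ger0_is_derive_le (f df : R -> R) (a b : R) : a <= b ->
  (forall x : R, is_derive x (1 : R) f (df x)) -> (forall x, a <= x <= b -> 0 <= df x) ->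
  f a <= f b.
Proof.
move=> ab f_df df_ge0; rewrite -subr_ge0.
have [|c + ->] := MVT_segment ab (fun x _ => f_df x).
  apply/continuous_subspaceT => x.
  exact/differentiable_continuous/derivable1_diffP.
by rewrite in_itv /= => /df_ge0 dfc_ge0; rewrite mulr_ge0 ?subr_ge0.
Qed.

Lemma mul1BexpR_le (y : R) : 0 <= y -> (1 - y) * expR y <= (1 + y) * expR (- y).
Proof.
move=> y_ge0; rewrite -subr_ge0.
pose g x : R := (1 + x) * expR (- x) - (1 - x) * expR x.
have -> : 0 = g 0 by rewrite /g oppr0 expR0; ring.
apply: (@ger0_is_derive_le g (fun x => x * (expR x - expR (- x))) 0 y y_ge0).
  by move=> x; apply: is_derive_eq; rewrite -![_ *: _]/(_ * _); ring.
by move=> x /andP[x_ge0 _]; rewrite mulr_ge0 // subr_ge0 ler_expR; lra.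
Qed.

Lemma expR_add_expRN_le (u : R) : expR u + expR (- u) <= 2 * expR (u ^+ 2 / 2).
Proof.
wlog u_ge0 : u / 0 <= u.
  move=> wlog_u; have [/wlog_u //|/ltW] := leP 0 u.
  by rewrite -oppr_ge0 => /wlog_u; rewrite opprK sqrrN addrC.
have eD (x a : R) : expR (a - x ^+ 2 / 2) = expR (- (x ^+ 2 / 2)) * expR a.
  by rewrite addrC expRD.
pose g (x : R) := - (expR (x - x ^+ 2 / 2) + expR (- x - x ^+ 2 / 2)).
have : g 0 <= g u.
  apply: (@ger0_is_derive_le g
    (fun x => expR (- (x ^+ 2 / 2)) * ((1 + x) * expR (- x) - (1 - x) * expR x)) 0 u u_ge0).
    move=> x; apply: is_derive_eq.
    by rewrite !eD -![_ *: _]/(_ * _); field.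
  move=> x /andP[x_ge0 _].
  by rewrite mulr_ge0 ?expR_ge0 // subr_ge0 mul1BexpR_le.
rewrite /g !eD expr0n /= mul0r oppr0 expR0 !mul1r -mulrDr lerN2.
by rewrite (expRN (u ^+ 2 / 2)) ler_pdivrMl ?expR_gt0 // mulrC.
Qed.
End Calculus.

Section FairBinomial.
Context {R : realType}.

Definition binpmf (h j : nat) : R := 'C(h, j)%:R / 2 ^+ h.

Lemma binpmf_ge0 h j : 0 <= binpmf h j.
Proof. by rewrite divr_ge0 ?exprn_ge0. Qed.

Lemma binpmf_sub h j : (j <= h)%N -> binpmf h (h - j) = binpmf h j.
Proof. by move=> jh; rewrite /binpmf bin_sub. Qed.

Lemma binpmf_pgf h (x : R) :
  \sum_(j < h.+1) binpmf h j * x ^+ j = ((1 + x) / 2) ^+ h.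
Proof.
rewrite exprMn exprDn mulr_suml; apply: eq_bigr => j _.
by rewrite /binpmf expr1n mul1r exprVn -(mulr_natl (x ^+ j)) mulrAC.
Qed.

Lemma binpmf_chernoff (P : pred nat) h (t lam : R) : 0 <= lam ->
  (forall j, (j <= h)%N -> P j -> j%:R <= t) ->
  \sum_(j < h.+1 | P j) binpmf h j <= expR (lam * (t - h%:R / 2) + h%:R * lam ^+ 2 / 8).
Proof.
move=> lam_ge0 Pt.
have markov : \sum_(j < h.+1 | P j) binpmf h j <=
    \sum_(j < h.+1) binpmf h j * expR (lam * (t - j%:R)).
  rewrite big_mkcond /=; apply: ler_sum => j _.
  case: ifP => [/(Pt _ (leq_ord j)) jt|_]; last by rewrite mulr_ge0 ?binpmf_ge0 ?expR_ge0.
  by apply: ler_peMr; rewrite ?binpmf_ge0 // (le_trans _ (expR_ge1Dx _)) // lerDl mulr_ge0 ?subr_ge0.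
have mgf : \sum_(j < h.+1) binpmf h j * expR (lam * (t - j%:R)) =
    expR (lam * t) * ((1 + expR (- lam)) / 2) ^+ h.
  rewrite -binpmf_pgf mulr_sumr; apply: eq_bigr => j _.
  by rewrite -expRM_natl mulrBr expRD mulrN (mulrC j%:R) mulrCA.
have hoeffding : (1 + expR (- lam)) / 2 <= expR (- (lam / 2) + lam ^+ 2 / 8).
  have -> : lam ^+ 2 / 8 = (lam / 2) ^+ 2 / 2 by field.
  have -> : 1 + expR (- lam) = expR (- (lam / 2)) * (expR (lam / 2) + expR (- (lam / 2))).
    by rewrite mulrDr -!expRD addNr expR0 -opprD -splitr.
  rewrite expRD -mulrA ler_wpM2l ?expR_ge0 // ler_pdivrMr // [X in _ <= X]mulrC.
  exact: expR_add_expRN_le.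
apply: (le_trans markov); rewrite mgf.
apply: le_trans (ler_wpM2l (expR_ge0 _) (lerXn2r _ _ _ hoeffding)) _.
- by rewrite nnegrE divr_ge0 ?addr_ge0 ?expR_ge0.
- exact: expR_ge0.
by rewrite -expRM_natl -expRD ler_expR; lra.
Qed.

Lemma binpmf_lower_tail (P : pred nat) h (c : R) : 0 <= c <= 2 ->
  (forall j, (j <= h)%N -> P j -> (2 + c) * j%:R < h.+1%:R) ->
  \sum_(j < h.+1 | P j) binpmf h j <= 2 * expR (- (h%:R * c ^+ 2 / 32)).
Proof.
move=> /andP[c_ge0 c_le2] Pj.
have c2_gt0 : 0 < 2 + c by lra.
have [t tE] : exists t : R, t * (2 + c) = h.+1%:R.
  by exists (h.+1%:R / (2 + c)); rewrite divfK ?gt_eqF.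
have Pt j : (j <= h)%N -> P j -> j%:R <= t.
  by move=> jh /(Pj _ jh) /ltW jc; rewrite -(ler_pM2r c2_gt0) tE mulrC.
(* Chernoff at lam = c / 2: the exponent is then at most 1/4 - h c^2 / 32,
   the difference being a multiple of (2 - c) (4 + h c^2). *)
apply: le_trans (@binpmf_chernoff P h t (c / 2) _ Pt) _; first by rewrite divr_ge0.
have expR_quarter : expR (1 / 4) <= 2 :> R.
  have := expR_ge1Dx (- (1 / 4) : R).
  have : expR (1 / 4) * expR (- (1 / 4)) = 1 :> R by rewrite -expRD subrr expR0.
  have := expR_gt0 (1 / 4 : R); nra.
apply: le_trans (_ : expR (1 / 4 - h%:R * c ^+ 2 / 32) <= _).
  have key : 8 * (c * t) <= 4 + 4 * c * h%:R - h%:R * c ^+ 2.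
    rewrite -(ler_pM2r c2_gt0) -(mulrA 8) -(mulrA c t) tE -natr1.
    have : 0 <= (2 - c) * (4 + h%:R * c ^+ 2).
      by apply: mulr_ge0; rewrite ?subr_ge0 // addr_ge0 // mulr_ge0 // sqr_ge0.
    lra.
  rewrite ler_expR; lra.
by rewrite expRD ler_wpM2r ?expR_ge0.
Qed.

Lemma binpmf_upper_tail (P : pred nat) h (c : R) : 0 <= c <= 2 ->
  (forall j, (j <= h)%N -> P j -> (2 + c) * (h - j)%:R < h.+1%:R) ->
  \sum_(j < h.+1 | P j) binpmf h j <= 2 * expR (- (h%:R * c ^+ 2 / 32)).
Proof.
move=> c02 Pj; rewrite (reindex_inj rev_ord_inj) /=.
under eq_bigr => j _ do rewrite subSS (binpmf_sub (leq_ord j)).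
apply: (@binpmf_lower_tail (fun j => P (h.+1 - j.+1)%N)) => // j jh.
rewrite subSS => /(Pj _ (leq_subr _ _)).
by rewrite subKn.
Qed.

Lemma binpmf_succ_ratio h j (c : R) : 0 <= c ->
  (1 + c) * binpmf h j < binpmf h j.+1 -> (2 + c) * j.+1%:R < h.+1%:R.
Proof.
move=> c_ge0; rewrite /binpmf mulrA ltr_pM2r ?invr_gt0 ?exprn_gt0 // => ratio.
have C_gt0 : (0 < 'C(h, j.+1))%N.
  by rewrite -(ltr0n R) (le_lt_trans _ ratio) // mulr_ge0 // addr_ge0.
have jh : (j < h)%N by rewrite -bin_gt0.
have Cj_gt0 : (0 : R) < 'C(h, j)%:R by rewrite ltr0n bin_gt0 ltnW.
have recur : j.+1%:R * 'C(h, j.+1)%:R = (h%:R - j%:R) * 'C(h, j)%:R :> R.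
  by rewrite -natrB 1?ltnW // -!natrM mul_bin_left.
rewrite -natr1 -(natr1 h) in recur *.
have j1_gt0 : (0 : R) < j%:R + 1 by rewrite ltr_wpDl.
nra.
Qed.

Lemma binpmf_pred_ratio h j (c : R) : 0 <= c ->
  (1 + c) * binpmf h j.+1 < binpmf h j -> (2 + c) * (h - j)%:R < h.+1%:R.
Proof.
move=> c_ge0; have [hj|jh] := leqP h j.
  by move=> _; rewrite (eqP hj) mulr0 ltr0Sn.
rewrite -(binpmf_sub (ltnW jh)) -(binpmf_sub jh) -(subnSK jh).
exact: binpmf_succ_ratio.
Qed.

End FairBinomial.

Lemma diff_private_of_bad_mass (R : realType) (n m : nat) (M : mechanism R n m)
    (eps delta : R) :
  (forall X k, 0 <= M X k) ->
  (forall X X', neighbors X X' ->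
    \sum_k (if expR eps * M X' k < M X k then M X k else 0) <= delta) ->
  diff_private eps delta M.
Proof.
move=> M_ge0 bad_le X X' XX' W; rewrite /prob_in.
set bad := fun k => if expR eps * M X' k < M X k then M X k else 0.
have bad_ge0 k : 0 <= bad k by rewrite /bad; case: ifP.
apply: le_trans (_ : \sum_(k in W) (expR eps * M X' k + bad k) <= _).
  apply: ler_sum => k _; rewrite /bad; case: ltP => [_|p_le]; last by rewrite addr0.
  by rewrite lerDr mulr_ge0 ?expR_ge0.
rewrite big_split /= -mulr_sumr lerD2l (le_trans _ (bad_le _ _ XX')) //.
rewrite [leRHS](bigID (mem W)) /= lerDl; apply: sumr_ge0 => k _; exact: bad_ge0.
Qed.

Lemma sum_ord_le_shift (R : realType) (m s h : nat) (G : nat -> R) :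
  (forall k, 0 <= G k) -> (forall k, (k < s)%N || (s + h < k)%N -> G k = 0) ->
  \sum_(k < m) G k <= \sum_(j < h.+1) G (s + j)%N.
Proof.
move=> G_ge0 G_out.
rewrite -(big_mkord xpredT) -(big_mkord xpredT (fun j => G (s + j))).
apply: (@le_trans _ _ (\sum_(0 <= k < m + (s + h.+1)) G k)).
  by rewrite (big_cat_nat _ (leq_addr _ _)) //= lerDl sumr_ge0.
rewrite (big_cat_nat _ (leq_addl _ _)) //= [X in _ + X]big1_seq ?addr0; last first.
  move=> k /andP[_]; rewrite mem_index_iota addnS => /andP[hk _].
  by rewrite G_out // hk orbT.
rewrite (big_cat_nat _ (leq_addr _ _)) //= big1_seq ?add0r; last first.
  by move=> k /andP[_]; rewrite mem_index_iota => /andP[_ ks]; rewrite G_out ?ks.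
rewrite -{1}(add0n s) big_addn addKn.
by under eq_bigr do rewrite addnC.
Qed.

Definition shifted_binpmf {R : realType} (h s k : nat) : R :=
  if (s <= k)%N then binpmf h (k - s) else 0.

Lemma shifted_binpmf_ge0 (R : realType) h s k : 0 <= shifted_binpmf h s k :> R.
Proof. by rewrite /shifted_binpmf; case: ifP => // _; exact: binpmf_ge0. Qed.

Lemma shifted_binpmf_addn (R : realType) h s j :
  shifted_binpmf h s (s + j)%N = binpmf h j :> R.
Proof. by rewrite /shifted_binpmf leq_addr addKn. Qed.

Lemma shifted_binpmf_bad_mass (R : realType) (m h s s' : nat) (c : R) :
  0 <= c <= 2 -> [\/ s' = s, s' = s.+1 | s = s'.+1] ->
  \sum_(k < m) (if (1 + c) * shifted_binpmf h s' k < shifted_binpmf h s k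
                then shifted_binpmf h s k else 0)
    <= 2 * expR (- (h%:R * c ^+ 2 / 32)).
Proof.
move=> c02 ss'; have c_ge0 : 0 <= c by case/andP: c02.
pose G k : R := if (1 + c) * shifted_binpmf h s' k < shifted_binpmf h s k
            then shifted_binpmf h s k else 0.
apply: le_trans (@sum_ord_le_shift R m s h G _ _) _.
- by move=> k; rewrite /G; case: ifP => // _; exact: shifted_binpmf_ge0.
- move=> k out; rewrite /G; suff -> : shifted_binpmf h s k = 0 :> R by rewrite if_same.
  rewrite /shifted_binpmf; case: ifP => // sk.
  case/orP: out => [|hk]; first by rewrite ltnNge sk.
  by rewrite /binpmf bin_small ?mul0r // ltn_subRL.
rewrite /G; under eq_bigr do rewrite shifted_binpmf_addn; rewrite -big_mkcond /=.
pose bad j := (1 + c) * shifted_binpmf h s' (s + j)%N < binpmf h j.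
change (\sum_(j < h.+1 | bad j) binpmf h j <= 2 * expR (- (h%:R * c ^+ 2 / 32))).
case: ss' => ss'.
- apply: binpmf_lower_tail => // j _.
  by rewrite /bad ss' shifted_binpmf_addn ltNge ler_peMl ?binpmf_ge0 // lerDl.
- apply: binpmf_lower_tail => // -[|j] _; first by rewrite mulr0 ltr0Sn.
  rewrite /bad ss' addnS -addSn shifted_binpmf_addn; exact: binpmf_succ_ratio.
- apply: binpmf_upper_tail => // j _.
  rewrite /bad ss' addSnnS shifted_binpmf_addn; exact: binpmf_pred_ratio.
Qed.

(* [C_H R H X k] is convertible to [shifted_binpmf #|H| (count_out H X) k]. *)
Definition count_out (n : nat) (H : {set 'I_n}) (X : {ffun 'I_n -> bool}) : nat :=
  \sum_(i | i \notin H) X i.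

Lemma neighbors_count_out (n : nat) (H : {set 'I_n}) (X X' : {ffun 'I_n -> bool}) :
  neighbors X X' ->
  [\/ count_out H X' = count_out H X, count_out H X' = (count_out H X).+1
    | count_out H X = (count_out H X').+1].
Proof.
move=> [i [Xi XE]]; have [iH|iH] := boolP (i \in H).
  by apply: Or31; apply: eq_bigr => j jH; rewrite XE //; apply: contraNneq jH => ->.
rewrite /count_out !(bigD1 i iH) /=.
have -> : \sum_(j | (j \notin H) && (j != i)) (X' j : nat) =
          \sum_(j | (j \notin H) && (j != i)) (X j : nat).
  by apply: eq_bigr => j /andP[_ ji]; rewrite XE.
by case: (X i) (X' i) Xi => [] [] // _; [constructor 3 | constructor 2].
Qed.

Lemma sqrt_scale_bounds (R : realType) (h : nat) (L : R) : 8 * L < h%:R ->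
  let c := Num.sqrt (32 * L / h%:R) in
  [/\ 0 <= c, c <= 2 & L <= h%:R * c ^+ 2 / 32].
Proof.
move=> hL c; split; first exact: sqrtr_ge0.
- rewrite -(ger0_norm (ler0n R 2)) -sqrtr_sqr ler_wsqrtr //.
  have [h0|h_gt0] := eqVneq (h%:R : R) 0; first by rewrite h0 invr0 mulr0 sqr_ge0.
  by rewrite ler_pdivrMr ?lt_def ?h_gt0 ?ler0n // expr2; lra.
have [L_le0|L_gt0] := lerP L 0.
  by rewrite (le_trans L_le0) // divr_ge0 // mulr_ge0 // sqr_ge0.
have h_gt0 : (0 : R) < h%:R by lra.
rewrite /c sqr_sqrtr ?divr_ge0 ?mulr_ge0 ?ler0n //; last exact: ltW.
suff -> : h%:R * (32 * L / h%:R) / 32 = L by [].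
by field; rewrite gt_eqF.
Qed.

Theorem claim4p4 (R : realType) (n : nat) (H : {set 'I_n}) (delta : R) :
  0 < delta ->
  8 * ln (4 / delta) < (#|H|)%:R ->
  let eps := ln (1 + Num.sqrt (32 * ln (4 / delta) / (#|H|)%:R)) in
  diff_private eps (delta / 2) (C_H R H) /\
  (delta < 4 -> eps < Num.sqrt (32 * ln (4 / delta) / (#|H|)%:R)).
Proof.
move=> delta_gt0 hL eps.
have [c_ge0 c_le2 L_le] := sqrt_scale_bounds hL.
set c := Num.sqrt _ in eps c_ge0 c_le2 L_le *.
have expR_eps : expR eps = 1 + c by rewrite lnK // posrE; lra.
split=> [|delta_lt4].
  apply: diff_private_of_bad_mass => [X k|X X' XX']; first exact: shifted_binpmf_ge0.
  rewrite expR_eps.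
  apply: le_trans (shifted_binpmf_bad_mass _ _ _ (neighbors_count_out H XX')) _.
    by rewrite c_ge0 c_le2.
  apply: le_trans (_ : 2 * expR (- ln (4 / delta)) <= _).
    by rewrite ler_pM2l // ler_expR lerN2.
  by rewrite expRN lnK ?posrE ?divr_gt0 // invf_div; lra.
have L_gt0 : 0 < ln (4 / delta) by rewrite ln_gt0 // ltr_pdivlMr // mul1r.
have c_gt0 : 0 < c.
  rewrite lt_def c_ge0 andbT; apply: contraTneq L_le => ->.
  by rewrite expr0n mulr0 mul0r -ltNge.
by rewrite -ltr_expR expR_eps; apply: expR_gt1Dx; rewrite gt_eqF.
Qed.
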